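(* Let $G$ be a topological group with identity $e$ and let $\mathcal A$ be the collection of all open subgroups of $G$. Then $G$ is strongly totally separated with respect to its left uniformity (equivalently, with respect to its right uniformity) if and only if $\bigcap_{A\in\mathcal A}A=\{e\}$.
   Context: A topological group is a group with a topology making multiplication and inversion continuous. For $A\subseteq G$: $A_L=\{(x,y): x^{-1}y\in A\}$, $A_R=\{(x,y): yx^{-1}\in A\}$. The left (resp. right) uniformity is the uniformity on $G$ with base $\{W_L: W\text{ open}, e\in W\}$ (resp. $\{W_R\}$). Sets $A,B$ are uniformly separated with respect to a uniformity $\mathcal U$ if some $U\in\mathcal U$ contains no $(x,y)$ with $x\in A$, $y\in B$. A uniform space $(X,\mathcal U)$ is strongly totally separated if for all $x\neq y$ in $X$ there is $V\subseteq X$ with $x\in V$, $y\notin V$, and $V$ uniformly separated from $X\setminus V$. *)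

From Stdlib Require Import Classical.
Set Implicit Arguments.

Section Defs.
Variable G : Type.

Definition is_topology (is_open : (G -> Prop) -> Prop) : Prop :=
  is_open (fun _ => True) /\
  (forall U V, is_open U -> is_open V -> is_open (fun x => U x /\ V x)) /\
  (forall F : (G -> Prop) -> Prop, (forall U, F U -> is_open U) ->
     is_open (fun x => exists U, F U /\ U x)).

Definition is_group (mul : G -> G -> G) (inv : G -> G) (e : G) : Prop :=
  (forall x y z, mul x (mul y z) = mul (mul x y) z) /\
  (forall x, mul e x = x) /\ (forall x, mul x e = x) /\
  (forall x, mul (inv x) x = e) /\ (forall x, mul x (inv x) = e).

(* Multiplication G x G -> G continuous for the product topology:
   the preimage of every open set is open in G x G, i.e. every point of it
   has an open box neighbourhood contained in it. *)
Definition mul_continuous (is_open : (G -> Prop) -> Prop) (mul : G -> G -> G) : Prop :=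
  forall U, is_open U -> forall x y, U (mul x y) ->
    exists V W, is_open V /\ is_open W /\ V x /\ W y /\
      (forall a b, V a -> W b -> U (mul a b)).

Definition inv_continuous (is_open : (G -> Prop) -> Prop) (inv : G -> G) : Prop :=
  forall U, is_open U -> is_open (fun x => U (inv x)).

Definition is_topological_group (is_open : (G -> Prop) -> Prop)
  (mul : G -> G -> G) (inv : G -> G) (e : G) : Prop :=
  is_topology is_open /\ is_group mul inv e /\
  mul_continuous is_open mul /\ inv_continuous is_open inv.

Definition setL (mul : G -> G -> G) (inv : G -> G) (A : G -> Prop) : G -> G -> Prop :=
  fun x y => A (mul (inv x) y).
Definition setR (mul : G -> G -> G) (inv : G -> G) (A : G -> Prop) : G -> G -> Prop :=
  fun x y => A (mul y (inv x)).

(* Entourages of the left / right uniformity: the filter generated by the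
   base {W_L : W open, e in W} (resp. {W_R}). *)
Definition left_entourage (is_open : (G -> Prop) -> Prop) (mul : G -> G -> G)
  (inv : G -> G) (e : G) (E : G -> G -> Prop) : Prop :=
  exists W, is_open W /\ W e /\ (forall x y, setL mul inv W x y -> E x y).
Definition right_entourage (is_open : (G -> Prop) -> Prop) (mul : G -> G -> G)
  (inv : G -> G) (e : G) (E : G -> G -> Prop) : Prop :=
  exists W, is_open W /\ W e /\ (forall x y, setR mul inv W x y -> E x y).

Definition unif_separated (ent : (G -> G -> Prop) -> Prop) (A B : G -> Prop) : Prop :=
  exists U, ent U /\ (forall x y, A x -> B y -> ~ U x y).

Definition strongly_totally_separated (ent : (G -> G -> Prop) -> Prop) : Prop :=
  forall x y : G, x <> y ->
    exists V : G -> Prop, V x /\ ~ V y /\ unif_separated ent V (fun z => ~ V z).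

Definition open_subgroup (is_open : (G -> Prop) -> Prop) (mul : G -> G -> G)
  (inv : G -> G) (e : G) (A : G -> Prop) : Prop :=
  is_open A /\ A e /\ (forall x y, A x -> A y -> A (mul x y)) /\
  (forall x, A x -> A (inv x)).

Definition open_subgroups_meet_trivial (is_open : (G -> Prop) -> Prop)
  (mul : G -> G -> G) (inv : G -> G) (e : G) : Prop :=
  forall x, (forall A, open_subgroup is_open mul inv e A -> A x) <-> x = e.

End Defs.

(* If an open subgroup A misses x^-1 y, the coset xA contains x,
   omits y, and is separated from its complement by the entourage A_L.
   Conversely, if V is separated from its complement by W_L, then V is a union
   of right cosets of the stabiliser {g | Vg = V}; that stabiliser contains the
   symmetric neighbourhood W cap W^-1 of e, so it is an open subgroup.  Taking
   V to separate e from x shows that x lies outside some open subgroup.  The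
   right uniformity of G is the left uniformity of the opposite group, which
   has the same open subgroups. *)
From Stdlib Require Import Classical FunctionalExtensionality PropExtensionality.

Set Implicit Arguments.

Section Group.
Variables (G : Type) (mul : G -> G -> G) (inv : G -> G) (e : G).
Hypothesis Hg : is_group mul inv e.

Lemma mulgA x y z : mul x (mul y z) = mul (mul x y) z.
Proof. apply Hg. Qed.

Lemma mul1g x : mul e x = x.
Proof. apply Hg. Qed.

Lemma mulg1 x : mul x e = x.
Proof. apply Hg. Qed.

Lemma mulVg x : mul (inv x) x = e.
Proof. apply Hg. Qed.

Lemma mulgV x : mul x (inv x) = e.
Proof. apply Hg. Qed.

Lemma mulKg x y : mul (inv x) (mul x y) = y.
Proof. now rewrite mulgA, mulVg, mul1g. Qed.

Lemma mulVKg x y : mul x (mul (inv x) y) = y.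
Proof. now rewrite mulgA, mulgV, mul1g. Qed.

Lemma invg1 : inv e = e.
Proof. rewrite <- (mulg1 (inv e)). apply mulVg. Qed.

Lemma invg_eq x y : mul x y = e -> inv x = y.
Proof. intro H. now rewrite <- (mulKg x y), H, mulg1. Qed.

Lemma invMg x y : inv (mul x y) = mul (inv y) (inv x).
Proof.
  apply invg_eq. now rewrite <- mulgA, (mulgA y), mulgV, mul1g, mulgV.
Qed.

Lemma mulVg_eq1 x y : mul (inv x) y = e -> x = y.
Proof. intro H. now rewrite <- (invg_eq (mulVg x)), (invg_eq H). Qed.

Lemma is_group_opp : is_group (fun x y => mul y x) inv e.
Proof.
  repeat split; intros; rewrite ?mulgA; auto using mul1g, mulg1, mulVg, mulgV.
Qed.

End Group.

Lemma open_of_local_nbhds (G : Type) (is_open : (G -> Prop) -> Prop) (A : G -> Prop) :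
  is_topology is_open ->
  (forall a, A a -> exists U, is_open U /\ U a /\ (forall b, U b -> A b)) ->
  is_open A.
Proof.
  intros [_ [_ Hunion]] Hloc.
  replace A with (fun a => exists U, (is_open U /\ forall b, U b -> A b) /\ U a).
  - apply Hunion. now intros U [HU _].
  - apply functional_extensionality; intro a.
    apply propositional_extensionality; split.
    + intros [U [[_ HUA] Ua]]. auto.
    + intro Aa. destruct (Hloc a Aa) as [U [HU [Ua HUA]]]. eauto.
Qed.

Lemma open_subgroups_meet_trivial_opp (G : Type) (is_open : (G -> Prop) -> Prop)
  (mul : G -> G -> G) (inv : G -> G) (e : G) :
  open_subgroups_meet_trivial is_open (fun x y => mul y x) inv e <->
  open_subgroups_meet_trivial is_open mul inv e.
Proof.
  assert (Hsub : forall A, open_subgroup is_open (fun x y => mul y x) inv e A <->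
                           open_subgroup is_open mul inv e A).
  { intro A; unfold open_subgroup; split; intros [HA [Ae [HAmul HAinv]]];
      repeat split; auto; intros x y Ax Ay; now apply HAmul. }
  unfold open_subgroups_meet_trivial.
  split; intros Hmeet x; rewrite <- Hmeet; split; intros Hx A HA; apply Hx.
  - exact (proj1 (Hsub A) HA).
  - exact (proj2 (Hsub A) HA).
  - exact (proj2 (Hsub A) HA).
  - exact (proj1 (Hsub A) HA).
Qed.

Section TopologicalGroup.
Variables (G : Type) (is_open : (G -> Prop) -> Prop)
  (mul : G -> G -> G) (inv : G -> G) (e : G).
Hypothesis HG : is_topological_group is_open mul inv e.

Let Htop : is_topology is_open := proj1 HG.
Let Hg : is_group mul inv e := proj1 (proj2 HG).

Lemma open_translate (U : G -> Prop) (c : G) :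
  is_open U -> is_open (fun b => U (mul c b)).
Proof.
  intro HU. apply open_of_local_nbhds; [exact Htop|].
  intros b Ub.
  destruct (proj2 (proj2 HG)) as [Hmul _].
  destruct (Hmul U HU c b Ub) as [V [W [_ [HW [Vc [Wb HVW]]]]]].
  exists W. auto.
Qed.

Lemma symmetric_open_nbhd (W : G -> Prop) :
  is_open W -> W e -> is_open (fun w => W w /\ W (inv w)) /\ W (inv e).
Proof.
  intros HW We. pose proof HG as [[_ [Hcap _]] [_ [_ Hinv]]].
  split; [apply Hcap; auto | now rewrite (invg1 Hg)].
Qed.

Lemma subgroup_open_of_nbhd (A W : G -> Prop) :
  (forall x y, A x -> A y -> A (mul x y)) ->
  is_open W -> W e -> (forall w, W w -> A w) -> is_open A.
Proof.
  intros HAmul HW We HWA. apply open_of_local_nbhds; [exact Htop|].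
  intros a Aa. exists (fun b => W (mul (inv a) b)). repeat split.
  - now apply open_translate.
  - now rewrite (mulVg Hg).
  - intros b Wb. rewrite <- (mulVKg Hg a b). auto.
Qed.

Lemma stabilizer_open_subgroup (V W : G -> Prop) :
  is_open W -> W e -> (forall a b, V a -> W (mul (inv a) b) -> V b) ->
  open_subgroup is_open mul inv e (fun g => forall v, V (mul v g) <-> V v).
Proof.
  intros HW We HVW.
  assert (Hstab_mul : forall g h, (forall v, V (mul v g) <-> V v) ->
            (forall v, V (mul v h) <-> V v) -> forall v, V (mul v (mul g h)) <-> V v).
  { intros g h Hgv Hhv v. now rewrite (mulgA Hg), Hhv. }
  destruct (symmetric_open_nbhd HW We) as [HW' Wie].
  split; [|split; [|split]].
  - apply subgroup_open_of_nbhd with (W := fun w => W w /\ W (inv w)); auto.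
    intros w [Ww Wiw] v; split; intro Hv.
    + apply (HVW _ _ Hv). now rewrite (invMg Hg), <- (mulgA Hg), (mulVg Hg), (mulg1 Hg).
    + apply (HVW _ _ Hv). now rewrite (mulKg Hg).
  - intro v. now rewrite (mulg1 Hg).
  - exact Hstab_mul.
  - intros g Hgv v. rewrite <- (Hgv (mul v (inv g))), <- (mulgA Hg), (mulVg Hg), (mulg1 Hg).
    tauto.
Qed.

Lemma sts_left_meet_trivial :
  strongly_totally_separated (left_entourage is_open mul inv e) ->
  open_subgroups_meet_trivial is_open mul inv e.
Proof.
  intros Hsts x; split.
  - intro Hx. apply NNPP. intro Hne.
    destruct (Hsts e x (fun H => Hne (eq_sym H)))
      as [V [Ve [nVx [U [[W [HW [We HWU]]] Hsep]]]]].
    assert (HVW : forall a b, V a -> W (mul (inv a) b) -> V b).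
    { intros a b Va Wab. apply NNPP. intro nVb. exact (Hsep a b Va nVb (HWU a b Wab)). }
    apply nVx. rewrite <- (mul1g Hg x).
    apply (Hx _ (stabilizer_open_subgroup V HW We HVW)). exact Ve.
  - intros -> A [_ [Ae _]]. exact Ae.
Qed.

Lemma meet_trivial_sts_left :
  open_subgroups_meet_trivial is_open mul inv e ->
  strongly_totally_separated (left_entourage is_open mul inv e).
Proof.
  intros Hmeet x y Hxy.
  assert (Hne : mul (inv x) y <> e) by (intro H; exact (Hxy (mulVg_eq1 Hg _ _ H))).
  destruct (not_all_ex_not _ _ (fun H => Hne (proj1 (Hmeet _) H))) as [A HA].
  apply imply_to_and in HA. destruct HA as [[HAo [Ae [HAmul _]]] nAy].
  exists (fun z => A (mul (inv x) z)). repeat split.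
  - now rewrite (mulVg Hg).
  - exact nAy.
  - exists (setL mul inv A). split; [exists A; auto|].
    intros a b Aa nAb Aab. apply nAb. unfold setL in Aab.
    replace (mul (inv x) b) with (mul (mul (inv x) a) (mul (inv a) b)).
    + now apply HAmul.
    + now rewrite <- (mulgA Hg), (mulgA Hg a), (mulgV Hg), (mul1g Hg).
Qed.

Lemma sts_left_iff_meet_trivial :
  strongly_totally_separated (left_entourage is_open mul inv e) <->
  open_subgroups_meet_trivial is_open mul inv e.
Proof. split; [apply sts_left_meet_trivial | apply meet_trivial_sts_left]. Qed.

Lemma is_topological_group_opp :
  is_topological_group is_open (fun x y => mul y x) inv e.
Proof.
  pose proof HG as [_ [_ [Hmul Hinv]]].
  split; [exact Htop|split; [exact (is_group_opp Hg)|split; [|exact Hinv]]].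
  intros U HU x y Uyx.
  destruct (Hmul U HU y x Uyx) as [V [W [HV [HW [Vy [Wx HVW]]]]]].
  exists W, V. repeat split; auto.
Qed.

End TopologicalGroup.

Theorem mainTheorem17 (G : Type) (is_open : (G -> Prop) -> Prop)
  (mul : G -> G -> G) (inv : G -> G) (e : G)
  (HG : is_topological_group is_open mul inv e) :
  (strongly_totally_separated (left_entourage is_open mul inv e) <->
     open_subgroups_meet_trivial is_open mul inv e) /\
  (strongly_totally_separated (right_entourage is_open mul inv e) <->
     open_subgroups_meet_trivial is_open mul inv e).
Proof.
  split; [exact (sts_left_iff_meet_trivial HG)|].
  change (right_entourage is_open mul inv e)
    with (left_entourage is_open (fun x y => mul y x) inv e).
  rewrite <- open_subgroups_meet_trivial_opp.
  exact (sts_left_iff_meet_trivial (is_topological_group_opp HG)).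
Qed.
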